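(* Let $I_{RPC}=(V,E,T_f,c,p)$ be an RPCSTP instance and let $t_p,t_q,t_{\tilde p},t_{\tilde q}\in T_f$ (not necessarily distinct). Writing $R(t_a,t_b)$ for the feasible region of the LP relaxation of $PrizeRCut(I_{RPC},t_a,t_b)$, we have $$\mathrm{proj}_y\big(R(t_p,t_q)\big)=\mathrm{proj}_y\big(R(t_{\tilde p},t_{\tilde q})\big).$$
   Context: A rooted prize-collecting Steiner tree (RPCSTP) instance $(V,E,T_f,c,p)$ consists of a finite undirected connected graph $(V,E)$, $c:E\to\mathbb{Q}_{>0}$, $p:V\to\mathbb{Q}_{\ge0}$ and a nonempty set $T_f\subseteq V$ of fixed terminals (which must be contained in every feasible solution). Let $T_p:=\{v:p(v)>0\}$ and $T_p\setminus T_f=\{t_1,\dots,t_z\}$. Transformation 2 (RPCSTP to SAP), for $t_a,t_b\in T_f$: set $V':=V$, $A':=\{(v,w),(w,v):\{v,w\}\in E\}$ with $c'((v,w)):=c(\{v,w\})$; for each $i=1,\dots,z$ add a new vertex $t_i'$, an arc $(t_i,t_i')$ of cost $0$ and an arc $(t_a,t_i')$ of cost $p(t_i)$. Terminal set $T':=\{t_1',\dots,t_z'\}\cup T_f$, root $t_b$. The LP relaxation of $PrizeRCut(I_{RPC},t_a,t_b)$ has variables $x\in\mathbb{R}^{A'}$, $y\in\mathbb{R}^{E}$ and constraints: $x(\delta^-(U))\ge1$ for all $U\subset V'$ with $t_b\notin U$, $U\cap T'\neq\emptyset$ (where $\delta^-(U)$ is the set of arcs of $A'$ entering $U$ and $x(F)=\sum_{a\in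 F}x(a)$); $0\le x\le 1$; $y(\{v_i,v_j\})=x((v_i,v_j))+x((v_j,v_i))$ for all $\{v_i,v_j\}\in E$; $0\le y\le1$; objective $\min c'^Tx$. $\mathrm{proj}_y$ denotes projection onto the $y$-variables. *)

From HB Require Import structures.
From mathcomp Require Import all_boot all_order all_algebra.
Set Implicit Arguments. Unset Strict Implicit. Unset Printing Implicit Defensive.
Import Order.TTheory GRing.Theory Num.Theory.
Local Open Scope ring_scope.

Definition simple_edges (V : finType) (E : {set {set V}}) : Prop :=
  forall e, e \in E -> #|e| = 2%N.

Definition adj (V : finType) (E : {set {set V}}) : rel V :=
  fun v w => (v != w) && ([set v; w] \in E).

Definition connected_graph (V : finType) (E : {set {set V}}) : Prop :=
  forall v w : V, connect (adj E) v w.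

Definition edge (V : finType) (E : {set {set V}}) := {e : {set V} | e \in E}.

(* t is one of t_1..t_z, i.e. t in T_p \ T_f *)
Definition extra (V : finType) (p : V -> rat) (Tf : {set V}) (t : V) : bool :=
  (0 < p t) && (t \notin Tf).

(* Vertices of the SAP instance: inl v = original vertex v, inr t = new copy t'
   (only for t in T_p \ T_f). *)
Definition is_vtx (V : finType) (p : V -> rat) (Tf : {set V}) (u : V + V) : bool :=
  match u with inl _ => true | inr t => extra p Tf t end.

(* Terminal set T' = {t_1',...,t_z'} u T_f *)
Definition is_term (V : finType) (p : V -> rat) (Tf : {set V}) (u : V + V) : bool :=
  match u with inl t => t \in Tf | inr t => extra p Tf t end.

Definition is_arc (V : finType) (E : {set {set V}}) (p : V -> rat) (Tf : {set V})
    (ta : V) (a : (V + V) * (V + V)) : bool :=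
  match a with
  | (inl v, inl w) => adj E v w
  | (inl v, inr t) => extra p Tf t && ((v == t) || (v == ta))
  | _ => false
  end.

Definition arc (V : finType) (E : {set {set V}}) (p : V -> rat) (Tf : {set V}) (ta : V) :=
  {a : (V + V) * (V + V) | is_arc E p Tf ta a}.

Definition LP_region (R : realFieldType) (V : finType) (E : {set {set V}})
    (p : V -> rat) (Tf : {set V}) (ta tb : V)
    (x : {ffun arc E p Tf ta -> R}) (y : {ffun edge E -> R}) : Prop :=
  (forall U : {set V + V},
      U \subset [set u | is_vtx p Tf u] ->
      inl tb \notin U ->
      [exists u in U, is_term p Tf u] ->
      1 <= \sum_(a : arc E p Tf ta | ((val a).1 \notin U) && ((val a).2 \in U)) x a)
  /\ (forall a, 0 <= x a <= 1)
  /\ (forall (e : edge E) (a1 a2 : arc E p Tf ta) (v w : V),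
        val e = [set v; w] -> val a1 = (inl v, inl w) -> val a2 = (inl w, inl v) ->
        y e = x a1 + x a2)
  /\ (forall e, 0 <= y e <= 1).

Arguments LP_region {R V} E p Tf ta tb x y.

From Pilot Require Import Defs.
From HB Require Import structures.
From mathcomp Require Import all_boot all_order all_algebra.
From mathcomp Require Import ring lra zify.
(* Re-import Defs so that [arc] refers to its arc type, not to path.arc. *)
Import Defs.
Set Implicit Arguments. Unset Strict Implicit. Unset Printing Implicit Defensive.
Import Order.TTheory GRing.Theory Num.Theory.
Local Open Scope ring_scope.

(* By symmetry it suffices to turn a point (x, y) of R(t_a, t_b) into a
   point (x', y) of R(t_a', t_b').  Viewing the graph part of x as arc
   capacities, every cut separating t_b from another fixed terminal has
   capacity at least 1, so by max-flow/min-cut there is a unit flow f from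
   t_b to t_b'.  Reversing it (x - f + f^T on graph arcs) keeps the sum of
   the two orientations of each edge, i.e. y, and moves the root to t_b';
   the arcs towards the new vertices t_i' get value 1. *)

Section Flows.
Variables (R : realFieldType) (T : finType).
Implicit Types (W : {set T}) (h c f g : T -> T -> R).

Definition inflow W h : R :=
  \sum_u \sum_v ((u \notin W) && (v \in W))%:R * h u v.
Definition outflow W h : R :=
  \sum_u \sum_v ((u \in W) && (v \notin W))%:R * h u v.

Definition net h v : R := \sum_u h u v - \sum_u h v u.

Definition isflow c s t lam f :=
  (forall u v, 0 <= f u v <= c u v) /\
  (forall v, net f v = lam * ((v == t)%:R - (v == s)%:R)).

Lemma inflow_lin W k h1 h2 :
  inflow W (fun a b => h1 a b + k * h2 a b) = inflow W h1 + k * inflow W h2.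
Proof.
rewrite /inflow mulr_sumr -big_split; apply: eq_bigr => u _ /=.
rewrite mulr_sumr -big_split; apply: eq_bigr => v _ /=; ring.
Qed.

Lemma net_lin k h1 h2 v :
  net (fun a b => h1 a b + k * h2 a b) v = net h1 v + k * net h2 v.
Proof. rewrite /net !big_split /= -!mulr_sumr; ring. Qed.

Lemma inflow_transpose W h : inflow W (fun u v => h v u) = outflow W h.
Proof.
rewrite /inflow /outflow exchange_big; apply: eq_bigr => u _.
by apply: eq_bigr => v _; rewrite andbC.
Qed.

Lemma inflow_ge0 W h : (forall a b, 0 <= h a b) -> 0 <= inflow W h.
Proof. by move=> h0; do 2!apply: sumr_ge0 => ? _; rewrite mulr_ge0. Qed.

Lemma outflow_ge0 W h : (forall a b, 0 <= h a b) -> 0 <= outflow W h.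
Proof. by move=> h0; do 2!apply: sumr_ge0 => ? _; rewrite mulr_ge0. Qed.

(* Rerouting a flow f in the capacities c: the flow is taken out of c and
   added in reverse, which keeps c(u,v) + c(v,u) unchanged. *)
Definition reroute c f : T -> T -> R := fun u v => c u v - f u v + f v u.

Lemma inflow_reroute W c f :
  inflow W (reroute c f) = inflow W c - (inflow W f - outflow W f).
Proof.
rewrite -inflow_transpose.
transitivity (inflow W (fun a b => c a b + (-1) * f a b + 1 * f b a)).
  by apply: eq_bigr => u _; apply: eq_bigr => v _; rewrite /reroute mulN1r mul1r.
rewrite !inflow_lin; ring.
Qed.

(* Summing the net inflow over W counts exactly the arcs crossing the
   boundary of W: inner arcs cancel. *)
Lemma net_sum W h :
  \sum_v (v \in W)%:R * net h v = inflow W h - outflow W h.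
Proof.
rewrite /net /inflow /outflow.
under eq_bigr => v _ do rewrite mulrBr !mulr_sumr.
rewrite sumrB exchange_big -!sumrB; apply: eq_bigr => u _.
rewrite -!sumrB; apply: eq_bigr => v _.
by case: (u \in W); case: (v \in W); rewrite /= ?mul0r ?mul1r ?subr0 ?sub0r ?subrr.
Qed.

Lemma sum_indicator W x : \sum_v (v \in W)%:R * ((v == x)%:R : R) = (x \in W)%:R.
Proof.
by rewrite (bigD1 x) //= eqxx mulr1 big1 ?addr0 // => u /negbTE ->; rewrite mulr0.
Qed.

Lemma net_cut h s t lam W :
  (forall v, net h v = lam * ((v == t)%:R - (v == s)%:R)) ->
  inflow W h - outflow W h = lam * ((t \in W)%:R - (s \in W)%:R).
Proof.
move=> hn; rewrite -net_sum.
under eq_bigr => v _ do rewrite hn mulrCA mulrBr.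
by rewrite -mulr_sumr sumrB !sum_indicator.
Qed.

Lemma sum_point (x : T) (b : bool) : \sum_u ((u == x) && b)%:R = b%:R :> R.
Proof. by rewrite (bigD1 x) //= eqxx big1 ?addr0 // => u /negbTE ->. Qed.

Definition walk_count x (p : seq T) : T -> T -> R :=
  fun u w => (count (pred1 (u, w)) (zip (x :: p) p))%:R.

Lemma net_walk_count x p v :
  net (walk_count x p) v = (v == last x p)%:R - (v == x)%:R.
Proof.
elim: p x => [|y p IH] x; first by rewrite /net /walk_count /= !big1 ?subrr.
have -> : net (walk_count x (y :: p)) v =
          net (fun u w => ((u, w) == (x, y))%:R + 1 * walk_count y p u w) v.
  by congr (_ - _); apply: eq_bigr => u _; rewrite /walk_count /= natrD mul1r eq_sym.
rewrite net_lin IH mul1r /net.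
under eq_bigr => u _ do rewrite xpair_eqE.
under [X in _ - X + _]eq_bigr => u _ do rewrite xpair_eqE andbC.
rewrite !sum_point /=; ring.
Qed.

Lemma path_zip (e : rel T) x p u w :
  path e x p -> (u, w) \in zip (x :: p) p -> e u w.
Proof.
elim: p x => [|y p IH] x //= /andP[exy hp]; rewrite in_cons => /orP[/eqP[-> ->]//|].
exact: IH.
Qed.

End Flows.

Section MaxFlow.
Variables (R : realFieldType) (T : finType) (s t : T).
Implicit Types (W : {set T}) (c f g : T -> T -> R) (lam : R).

Definition cutcond c lam :=
  forall W, t \in W -> s \notin W -> lam <= inflow W c.

(* The termination measure of the augmentation procedure: first the number
   of arcs of positive capacity, then the number of non-tight cuts. *)
Definition posarcs c := [set a : T * T | 0 < c a.1 a.2].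
Definition nontight c lam :=
  [set W : {set T} | [&& t \in W, s \notin W & lam < inflow W c]].
Definition meas c lam := (#|posarcs c| * #|{set T}|.+1 + #|nontight c lam|)%N.

Definition reducible c lam := exists c' lam',
  [/\ (meas c' lam' < meas c lam)%N, (forall a b, 0 <= c' a b), 0 <= lam',
      cutcond c' lam' & forall f, isflow c' s t lam' f -> exists f', isflow c s t lam f'].

Lemma meas_lt_posarcs c c' lam lam' :
  posarcs c' \proper posarcs c -> (meas c' lam' < meas c lam)%N.
Proof.
move=> /proper_card lt_pos.
have : (#|nontight c' lam'| <= #|{set T}|)%N by apply: max_card.
rewrite /meas; nia.
Qed.

Lemma meas_lt_nontight c c' lam lam' :
  posarcs c' \subset posarcs c -> nontight c' lam' \proper nontight c lam ->
  (meas c' lam' < meas c lam)%N.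
Proof. by move=> /subset_leq_card le_pos /proper_card lt_nt; rewrite /meas; nia. Qed.

Lemma zero_flow c lam : (forall a b, 0 <= c a b) -> lam = 0 \/ s = t ->
  isflow c s t lam (fun _ _ => 0).
Proof.
move=> hc h; split => [u v|v]; first by rewrite lexx hc.
rewrite /net !big1 // subrr.
by case: h => [->|->]; rewrite ?mul0r // subrr mulr0.
Qed.

(* If lam > 0 units must cross every cut, t is reachable from s along arcs
   of positive capacity: otherwise the vertices not reachable from s form a
   cut of capacity 0. *)
Lemma cutcond_connect c lam : (forall a b, 0 <= c a b) -> 0 < lam ->
  cutcond c lam -> connect [rel a b | 0 < c a b] s t.
Proof.
move=> hc hlam hcut; apply/negPn/negP => hst.
pose W := [set v | ~~ connect [rel a b | 0 < c a b] s v].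
have := hcut W; rewrite !inE hst connect0 => /(_ isT isT).
suff -> : inflow W c = 0 by rewrite leNgt hlam.
apply: big1 => a _; apply: big1 => b _; rewrite !inE negbK.
have [hsa|] /= := boolP (connect _ s a); last by rewrite mul0r.
have [hsb|hsb] /= := boolP (connect _ s b); first by rewrite mul0r.
have : ~~ (0 < c a b) by apply: contra hsb => hab; exact: connect_trans hsa (connect1 _).
by rewrite -leNgt mul1r => h; apply/eqP; rewrite eq_le h hc.
Qed.

Lemma unit_walk c : connect [rel a b | 0 < c a b] s t ->
  exists g, [/\ forall a b, 0 <= g a b, forall a b, 0 < g a b -> 0 < c a b
    & forall v, net g v = (v == t)%:R - (v == s)%:R].
Proof.
move=> /connectP [q hq htl]; exists (@walk_count R T s q); split.
- by move=> a b; rewrite ler0n.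
- by move=> a b; rewrite ltr0n -has_count has_pred1; exact: path_zip hq.
- by move=> v; rewrite net_walk_count -htl.
Qed.

(* Uncrossing: if the cut W is tight, the capacity of an arc (u, v) leaving
   W can be set to 0 without violating the cut condition, since
   c(W n W') + c(W u W') <= c(W) + c'(W'). *)
Lemma uncross c lam W u v :
  cutcond c lam -> (forall a b, 0 <= c a b) -> inflow W c <= lam ->
  t \in W -> s \notin W -> u \in W -> v \notin W ->
  cutcond (fun a b => if (a == u) && (b == v) then 0 else c a b) lam.
Proof.
move=> hcut hc hW tW sW uW vW W' tW' sW'.
have h1 : lam <= inflow (W :&: W') c by apply: hcut; rewrite in_setI ?tW ?tW' // negb_and sW.
have h2 : lam <= inflow (W :|: W') c by apply: hcut; rewrite in_setU ?tW // negb_or sW sW'.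
set c' := fun a b => _.
suff : inflow (W :&: W') c + inflow (W :|: W') c <= inflow W c + inflow W' c' by lra.
rewrite /inflow -!big_split; apply: ler_sum => a _; rewrite -!big_split.
apply: ler_sum => b _ /=; rewrite /c' !in_setI !in_setU.
case: ifP => [/andP[/eqP-> /eqP->]|_].
  rewrite uW (negbTE vW) /=.
  by case: (u \in W'); case: (v \in W'); rewrite /= ?mul0r ?mulr0 ?addr0 ?lexx.
have := hc a b.
by case: (a \in W); case: (a \in W'); case: (b \in W); case: (b \in W');
  rewrite /= ?mul0r ?mul1r ?add0r ?addr0 => h; lra.
Qed.

Section Augment.
Variables (c g : T -> T -> R) (lam : R).
Hypotheses (hc : forall a b, 0 <= c a b) (hlam : 0 <= lam) (hcut : cutcond c lam).
Hypotheses (g0 : forall a b, 0 <= g a b) (gc : forall a b, 0 < g a b -> 0 < c a b).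
Hypothesis gnet : forall v, net g v = (v == t)%:R - (v == s)%:R.

Lemma walk_inflow W : t \in W -> s \notin W -> inflow W g = 1 + outflow W g.
Proof.
move=> tW sW; have := @net_cut _ _ g s t 1 W.
rewrite tW (negbTE sW) mul1r subr0 => /(_ (fun v => etrans (gnet v) (esym (mul1r _)))).
move=> /= h; lra.
Qed.

Lemma tight_cut_reducible W : t \in W -> s \notin W -> inflow W c <= lam ->
  0 < outflow W g -> reducible c lam.
Proof.
move=> tW sW Wt Wo.
have [[u v] /andP[_ huv]] : exists a : T * T,
    predT a && (0 < ((a.1 \in W) && (a.2 \notin W))%:R * g a.1 a.2).
  apply: psumr_neq0P => [a _|]; first by rewrite mulr_ge0.
  have -> : \sum_(a : T * T) ((a.1 \in W) && (a.2 \notin W))%:R * g a.1 a.2 = outflow W g.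
    by rewrite /outflow pair_bigA.
  by apply/eqP; rewrite gt_eqF.
move: huv => /=; have [/andP[uW vW]|] := boolP ((u \in W) && (v \notin W));
  last by rewrite mul0r ltxx.
rewrite mul1r => guv.
pose c' a b := if (a == u) && (b == v) then 0 else c a b.
have hc'c a b : c' a b <= c a b by rewrite /c'; case: ifP => // _; exact: hc.
exists c', lam; split => //.
- apply: meas_lt_posarcs; apply/properP; split.
    by apply/subsetP => a; rewrite !inE => h; apply: lt_le_trans h (hc'c _ _).
  by exists (u, v); rewrite !inE /= ?(gc guv) // /c' !eqxx ltxx.
- by move=> a b; rewrite /c'; case: ifP.
- exact: (uncross hcut hc Wt tW sW uW vW).
- move=> f [hf1 hf2]; exists f; split => // a b.
  by have /andP[-> h] := hf1 a b; exact: le_trans h (hc'c _ _).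
Qed.

Lemma bottleneck :
  (forall W, t \in W -> s \notin W -> 0 < outflow W g -> lam < inflow W c) ->
  (exists a b, 0 < g a b) ->
  exists2 d : R, 0 < d &
    [/\ forall a b, d * g a b <= c a b,
        forall W, t \in W -> s \notin W -> d * outflow W g <= inflow W c - lam
      & (exists a b, 0 < g a b /\ d * g a b = c a b) \/
        (exists2 W : {set T}, [&& t \in W, s \notin W & 0 < outflow W g] &
           d * outflow W g = inflow W c - lam)].
Proof.
move=> hslack [a0 [b0 gab0]].
pose P (x : (T * T) + {set T}) := match x with
  | inl a => 0 < g a.1 a.2
  | inr W => [&& t \in W, s \notin W & 0 < outflow W g] end.
pose F (x : (T * T) + {set T}) := match x with
  | inl a => c a.1 a.2 / g a.1 a.2
  | inr W => (inflow W c - lam) / outflow W g end.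
have P0 : P (inl (a0, b0)) by [].
case: (arg_minP F P0) => x Px hmin; exists (F x).
  case: x Px {hmin} => [[a b] /= hg|W /and3P[tW sW Wo]]; apply: divr_gt0 => //.
  - exact: gc.
  - by rewrite subr_gt0; apply: hslack.
split.
- move=> a b; have [gp|] := ltP 0 (g a b).
    by have := hmin (inl (a, b)) gp; rewrite /= -ler_pdivlMr.
  move=> g_le0; have -> : g a b = 0 by apply/eqP; rewrite eq_le g_le0 g0.
  by rewrite mulr0 hc.
- move=> W tW sW; have [Wo|] := ltP 0 (outflow W g).
    have PW : P (inr W) by rewrite /= tW sW Wo.
    by have := hmin (inr W) PW; rewrite /= -ler_pdivlMr.
  move=> o_le0; have -> : outflow W g = 0 by apply/eqP; rewrite eq_le o_le0 outflow_ge0.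
  by rewrite mulr0 subr_ge0 hcut.
- case: x Px {hmin} => [[a b] /= gp|W /= PW].
    by left; exists a, b; rewrite divfK // gt_eqF.
  right; exists W => //; case/and3P: PW => _ _ Wo.
  by rewrite divfK // gt_eqF.
Qed.

Lemma augment : s != t ->
  (forall W, t \in W -> s \notin W -> 0 < outflow W g -> lam < inflow W c) ->
  (exists f, isflow c s t lam f) \/ reducible c lam.
Proof.
move=> hst hslack.
have gt : exists a b, 0 < g a b.
  have : net g t = 1 by rewrite gnet eqxx eq_sym (negbTE hst) subr0.
  rewrite /net => h.
  have out_ge0 : 0 <= \sum_u g t u by apply: sumr_ge0.
  have [u /andP[_ gu]] : exists u, predT u && (0 < g u t).
    by apply: psumr_neq0P => [u _|]; [exact: g0 | apply/eqP; rewrite gt_eqF //; lra].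
  by exists u, t.
have [d d_gt0 [dg dcut dtight]] := bottleneck hslack gt.
have [lam_le_d|d_lt_lam] := leP lam d.
  left; exists (fun a b => lam * g a b); split => [a b|v].
    rewrite mulr_ge0 //=; apply: le_trans (dg a b).
    by rewrite ler_wpM2r.
  by rewrite /net -!mulr_sumr -mulrBr -/(net g v) gnet.
right; pose c' a b := c a b + (- d) * g a b.
have dg0 a b : 0 <= d * g a b by rewrite mulr_ge0 ?g0 ?ltW.
have c'_le a b : c' a b <= c a b by rewrite /c' mulNr; have := dg0 a b; lra.
have c'_in W : t \in W -> s \notin W -> inflow W c' = inflow W c - d * (1 + outflow W g).
  by move=> tW sW; rewrite inflow_lin walk_inflow //; ring.
have pos_sub : posarcs c' \subset posarcs c.
  by apply/subsetP => a; rewrite !inE => h; apply: lt_le_trans h (c'_le _ _).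
exists c', (lam - d); split.
- case: dtight => [[a [b [gab dgab]]]|[W0 /and3P[tW0 sW0 W0o] dW0]].
    apply: meas_lt_posarcs; apply/properP; split => //.
    by exists (a, b); rewrite !inE /= ?gc // /c' mulNr dgab subrr ltxx.
  apply: meas_lt_nontight => //; apply/properP; split.
    apply/subsetP => W; rewrite !inE => /and3P[tW sW]; rewrite c'_in // tW sW /=.
    by have := mulr_ge0 (ltW d_gt0) (outflow_ge0 W g0); lra.
  exists W0; rewrite !inE tW0 sW0 /= ?hslack // c'_in //; lra.
- by move=> a b; rewrite /c' mulNr subr_ge0.
- by rewrite subr_ge0 ltW.
- by move=> W tW sW; rewrite c'_in //; have := dcut W tW sW; lra.
- move=> f [hf1 hf2]; exists (fun a b => f a b + d * g a b); split => [a b|v].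
    have /andP[f0 fc'] := hf1 a b; rewrite addr_ge0 ?dg0 //=.
    by move: fc'; rewrite /c' mulNr; lra.
  by rewrite net_lin hf2 gnet; ring.
Qed.

End Augment.

(* By induction on the
   measure: walk from s to t along positive arcs and either delete an arc
   leaving a tight cut or push the bottleneck amount along the walk. *)
Theorem maxflow_mincut c lam : (forall a b, 0 <= c a b) -> 0 <= lam ->
  cutcond c lam -> exists f, isflow c s t lam f.
Proof.
have [n] := ubnP (meas c lam); elim: n c lam => // n IH c lam hm hc hlam hcut.
have reduce : reducible c lam -> exists f, isflow c s t lam f.
  move=> [c' [lam' [lt_meas c'0 lam'0 cut' back]]].
  have [|f hf] := IH c' lam' _ c'0 lam'0 cut'; last exact: back hf.
  exact: leq_trans lt_meas _.
have [st|hst] := eqVneq s t; first by exists (fun _ _ => 0); apply: zero_flow hc (or_intror st).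
have [lam0|lam_ne0] := eqVneq lam 0; first by exists (fun _ _ => 0); apply: zero_flow hc (or_introl lam0).
have lam_gt0 : 0 < lam by rewrite lt_def lam_ne0.
have [g [g0 gc gnet]] := unit_walk (cutcond_connect hc lam_gt0 hcut).
have [/existsP[W /and4P[tW sW Wt Wo]]|no_tight] := boolP [exists W : {set T},
    [&& t \in W, s \notin W, inflow W c <= lam & 0 < outflow W g]].
  exact/reduce/(tight_cut_reducible hc hlam hcut g0 gc tW sW Wt Wo).
have hslack W : t \in W -> s \notin W -> 0 < outflow W g -> lam < inflow W c.
  move=> tW sW Wo; move/existsPn: no_tight => /(_ W).
  by rewrite tW sW Wo andbT /= -ltNge.
by case: (augment hc hlam hcut g0 gc gnet hst hslack) => // /reduce.
Qed.

End MaxFlow.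

Section Reroute.
Variables (R : realFieldType) (V : finType) (E : {set {set V}}) (p : V -> rat)
  (Tf : {set V}).
Local Notation vtx := (V + V)%type.

Definition ext_arc (ta : V) (x : {ffun arc E p Tf ta -> R}) (z : vtx * vtx) : R :=
  if insub z is Some a then x a else 0.

Lemma ext_arc_val (ta : V) (x : {ffun arc E p Tf ta -> R}) a : ext_arc x (val a) = x a.
Proof. by rewrite /ext_arc valK. Qed.

Lemma ext_arc_out (ta : V) (x : {ffun arc E p Tf ta -> R}) z :
  ~~ is_arc E p Tf ta z -> ext_arc x z = 0.
Proof. by move=> h; rewrite /ext_arc insubN. Qed.

Lemma ext_arc_Sub (ta : V) (x : {ffun arc E p Tf ta -> R}) z (h : is_arc E p Tf ta z) :
  ext_arc x z = x (Sub z h).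
Proof. by rewrite -[z in LHS]/(val (Sub z h : arc E p Tf ta)) ext_arc_val. Qed.

Lemma ext_arc_ge0 (ta : V) (x : {ffun arc E p Tf ta -> R}) z :
  (forall a, 0 <= x a <= 1) -> 0 <= ext_arc x z.
Proof.
move=> hx; have [h|h] := boolP (is_arc E p Tf ta z); last by rewrite ext_arc_out.
by rewrite (ext_arc_Sub x h); case/andP: (hx (Sub z h)).
Qed.

Lemma cut_sum_inflow (ta : V) (x : {ffun arc E p Tf ta -> R}) (U : {set vtx}) :
  \sum_(a : arc E p Tf ta | ((val a).1 \notin U) && ((val a).2 \in U)) x a =
  inflow U (fun u v => ext_arc x (u, v)).
Proof.
rewrite /inflow pair_big /=.
under [RHS]eq_bigr => z _ do rewrite -surjective_pairing.
rewrite [RHS](bigID (is_arc E p Tf ta)) /= [X in _ = _ + X]big1 ?addr0; last first.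
  by move=> z hz; rewrite ext_arc_out ?mulr0.
rewrite (reindex_omap (val : arc E p Tf ta -> _) insub); last first.
  by move=> z hz; rewrite insubT.
rewrite big_mkcond [RHS]big_mkcond; apply: eq_bigr => a _.
by rewrite valK (valP a) eqxx ext_arc_val; case: ifP; rewrite ?mul1r ?mul0r.
Qed.

Definition graph_arc (z : vtx * vtx) : bool :=
  if z is (inl _, inl _) then true else false.

(* The part of an arc vector on the original graph, as capacities on the
   vertices of the SAP instance; it does not depend on t_a. *)
Definition graph_part (ta : V) (x : {ffun arc E p Tf ta -> R}) (u v : vtx) : R :=
  if (u, v) is (inl _, inl _) then ext_arc x (u, v) else 0.

Lemma graph_part_ge0 (ta : V) (x : {ffun arc E p Tf ta -> R}) u v :
  (forall a, 0 <= x a <= 1) -> 0 <= graph_part x u v.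
Proof.
by move=> hx; rewrite /graph_part; case: u => u; case: v => v //; apply: ext_arc_ge0.
Qed.

Lemma adjC v w : adj E v w = adj E w v.
Proof. by rewrite /adj eq_sym setUC. Qed.

Lemma graph_part_nonarc (ta ta' : V) (x : {ffun arc E p Tf ta -> R}) u v :
  ~~ is_arc E p Tf ta' (u, v) -> graph_part x u v = 0 /\ graph_part x v u = 0.
Proof.
case: u => u; case: v => v // hna; rewrite /graph_part /= !ext_arc_out //.
by rewrite /= adjC.
Qed.

Section Region.
Variables (ta tb : V) (x : {ffun arc E p Tf ta -> R}) (y : {ffun edge E -> R}).
Hypothesis hx : LP_region E p Tf ta tb x y.

(* Every cut separating a fixed terminal from the root t_b is crossed by
   the graph part of x with weight at least 1: the arcs to the new vertices
   t_i' never enter a set of original vertices. *)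
Lemma region_cut (U : {set vtx}) t0 : inl tb \notin U -> t0 \in Tf -> inl t0 \in U ->
  1 <= inflow U (graph_part x).
Proof.
move=> tbU t0T t0U; have [hcut _] := hx.
pose U0 := [set z : vtx | if z is inl v then inl v \in U else false].
have -> : inflow U (graph_part x) = inflow U0 (fun u v => ext_arc x (u, v)).
  apply: eq_bigr => u _; apply: eq_bigr => v _.
  case: u => u; case: v => v; rewrite /graph_part !inE /= ?andbF ?mulr0 ?mul0r //.
  by rewrite ext_arc_out ?mulr0.
rewrite -cut_sum_inflow; apply: hcut.
- by apply/subsetP => -[v|v]; rewrite !inE.
- by rewrite inE.
- by apply/existsP; exists (inl t0); rewrite inE t0U.
Qed.

Lemma graph_part_edge v w (hvw : adj E v w) :
  graph_part x (inl v) (inl w) + graph_part x (inl w) (inl v) =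
  y (Sub [set v; w] (proj2 (andP hvw))).
Proof.
have [_ [_ [hsym _]]] := hx; have hwv : adj E w v by rewrite adjC.
rewrite (hsym _ (Sub (inl v, inl w) hvw) (Sub (inl w, inl v) hwv) v w) //.
by rewrite -!ext_arc_val.
Qed.

Lemma unit_flow tb' : tb' \in Tf ->
  exists f, isflow (graph_part x) (inl tb) (inl tb') 1 f.
Proof.
move=> htb'; apply: maxflow_mincut => //.
- by move=> u v; apply: graph_part_ge0; case: hx => _ [].
- by move=> W tb'W tbW; apply: region_cut tbW htb' tb'W.
Qed.

Section NewRoot.
Variables (ta' tb' : V) (f : vtx -> vtx -> R).
Hypotheses (hta' : ta' \in Tf) (hf : isflow (graph_part x) (inl tb) (inl tb') 1 f).

Local Notation newcap := (reroute (graph_part x) f).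

(* Reversing the unit flow moves the root from t_b to t_b': a cut not
   containing t_b' either contains t_b, and then the reversed flow enters it,
   or it is a cut of the old instance. *)
Lemma rerouted_cut (U : {set vtx}) t0 : inl tb' \notin U -> t0 \in Tf -> inl t0 \in U ->
  1 <= inflow U newcap.
Proof.
move=> tb'U t0T t0U; have [_ hnet] := hf.
rewrite inflow_reroute (net_cut U hnet) (negbTE tb'U) mul1r sub0r opprK.
have [tbU|tbU] := boolP (inl tb \in U).
  by rewrite lerDr; apply: inflow_ge0 => u v; apply: graph_part_ge0; case: hx => _ [].
by rewrite addr0; apply: region_cut t0T t0U.
Qed.

Definition rerouted : {ffun arc E p Tf ta' -> R} :=
  [ffun a => if val a is (inl v, inl w) then newcap (inl v) (inl w) else 1].

Lemma rerouted_edge v w (hvw : adj E v w) :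
  newcap (inl v) (inl w) + newcap (inl w) (inl v) = y (Sub [set v; w] (proj2 (andP hvw))).
Proof. by rewrite -graph_part_edge /reroute; ring. Qed.

(* A rerouted arc carries between 0 and its edge value y(e) <= 1, because
   the flow f fits under the graph part of x. *)
Lemma rerouted_bounds a : 0 <= rerouted a <= 1.
Proof.
rewrite ffunE; case: a => -[[v|v] [w|w]] ha /=; rewrite ?ler01 ?lexx //.
have [hfb _] := hf; have [_ [_ [_ hy]]] := hx.
have /andP[y0 y1] := hy (Sub [set v; w] (proj2 (andP ha))).
move: y0 y1; rewrite -rerouted_edge /reroute.
have /andP[f1 f1c] := hfb (inl v) (inl w); have /andP[f2 f2c] := hfb (inl w) (inl v).
move=> y0 y1; apply/andP; split; lra.
Qed.

(* If only graph arcs enter U, the cut sum of the new arc vector is the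
   inflow of the rerouted capacities; off the graph arcs these vanish since
   the flow f does. *)
Lemma rerouted_cut_sum (U : {set vtx}) :
  ~~ [exists a : arc E p Tf ta', [&& (val a).1 \notin U, (val a).2 \in U & ~~ graph_arc (val a)]] ->
  \sum_(a : arc E p Tf ta' | ((val a).1 \notin U) && ((val a).2 \in U)) rerouted a =
  inflow U newcap.
Proof.
move=> /existsPn graph_only.
rewrite cut_sum_inflow; apply: eq_bigr => u _; apply: eq_bigr => v _.
have [uv|] := boolP ((u \notin U) && (v \in U)); last by rewrite !mul0r.
have [h|h] := boolP (is_arc E p Tf ta' (u, v)); last first.
  have [gp1 gp2] := graph_part_nonarc x h; have [hfb _] := hf.
  have f0 a b : graph_part x a b = 0 -> f a b = 0.
    by move=> gab; apply/eqP; rewrite eq_le -{1}gab andbC; exact: hfb.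
  by rewrite ext_arc_out // /reroute gp1 (f0 _ _ gp1) (f0 _ _ gp2) subrr addr0.
rewrite (ext_arc_Sub _ h) ffunE; have := graph_only (Sub _ h); rewrite /=.
case/andP: uv => -> -> /=.
by rewrite negbK; case: u {h} => u; case: v.
Qed.

(* The cut constraints of the new instance: a cut entered by an arc towards
   some t_i' has weight 1 on it; otherwise it contains a fixed terminal
   (t_i' in U forces t_a' in U) and rerouted_cut applies. *)
Lemma rerouted_cut_constraint (U : {set vtx}) :
  U \subset [set u | is_vtx p Tf u] -> inl tb' \notin U ->
  [exists u in U, is_term p Tf u] ->
  1 <= \sum_(a : arc E p Tf ta' | ((val a).1 \notin U) && ((val a).2 \in U)) rerouted a.
Proof.
move=> _ tb'U /existsP[u0 /andP[u0U u0T]].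
have [/existsP[a /and3P[a1 a2 a3]]|graph_only] := boolP [exists a : arc E p Tf ta',
    [&& (val a).1 \notin U, (val a).2 \in U & ~~ graph_arc (val a)]].
  rewrite (bigD1 a) ?a1 ?a2 //=.
  have -> : rerouted a = 1 by rewrite ffunE; move: a3; case: (val a) => -[?|?] [?|?].
  by rewrite lerDl; apply: sumr_ge0 => b _; case/andP: (rerouted_bounds b).
rewrite rerouted_cut_sum //.
case: u0 u0U u0T => t0 t0U t0T; first exact: rerouted_cut t0T t0U.
apply: rerouted_cut tb'U hta' _.
have ha : is_arc E p Tf ta' (inl ta', inr t0) by rewrite /= eqxx orbT andbT.
move/existsPn: graph_only => /(_ (Sub _ ha)) /=.
by rewrite t0U !andbT negbK.
Qed.

Lemma rerouted_region : LP_region E p Tf ta' tb' rerouted y.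
Proof.
have [_ [_ [_ hy]]] := hx.
split; [exact: rerouted_cut_constraint | split; [exact: rerouted_bounds | split => //]].
move=> e a1 a2 v w he ha1 ha2; rewrite !ffunE ha1 ha2.
have hvw : adj E v w by have := valP a1; rewrite ha1.
by rewrite rerouted_edge; congr (y _); apply: val_inj.
Qed.

End NewRoot.

End Region.

End Reroute.

Lemma region_root_change (R : realFieldType) (V : finType) (E : {set {set V}})
    (p : V -> rat) (Tf : {set V}) (ta tb ta' tb' : V) (y : {ffun edge E -> R}) :
  ta' \in Tf -> tb' \in Tf ->
  (exists x, LP_region E p Tf ta tb x y) -> exists x, LP_region E p Tf ta' tb' x y.
Proof.
move=> hta' htb' [x hx]; have [f hf] := unit_flow hx htb'.
by have := rerouted_region hx hta' hf; exists (rerouted x ta' f).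
Qed.

Theorem proposition7 (R : realFieldType) (V : finType) (E : {set {set V}})
    (Tf : {set V}) (c : edge E -> rat) (p : V -> rat)
    (hE : simple_edges E) (hconn : connected_graph E)
    (hc : forall e, 0 < c e) (hp : forall v, 0 <= p v) (hTf : Tf != set0)
    (tp tq tp' tq' : V)
    (htp : tp \in Tf) (htq : tq \in Tf) (htp' : tp' \in Tf) (htq' : tq' \in Tf) :
  forall y : {ffun edge E -> R},
    (exists x, LP_region E p Tf tp tq x y) <-> (exists x, LP_region E p Tf tp' tq' x y).
Proof. by move=> y; split; apply: region_root_change. Qed.
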